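(* Let $V$ be a finite set of points in $\mathbb{R}^m$ such that the Euclidean distance $d(x,y)=\|x-y\|_2$ restricted to $V$ is an ultrametric, and let $T$ be a generating tree for $V$. Then every pair $\{i,j\}\subseteq V$ obtains revenue $rev(i,j)=1$ in $T$; in particular $rev_T(V)=\binom{|V|}{2}$ and $T$ maximizes the Hierarchical-Revenue objective over all hierarchical clustering trees on $V$.
   Context: A metric is an ultrametric if $d(x,y)\le\max\{d(x,z),d(y,z)\}$ for all $x,y,z$. A generating tree for $V$ is a rooted binary tree $T$ with $|V|$ leaves in bijection with $V$ and $|V|-1$ internal nodes (set $\mathcal N$), with a weight function $W:\mathcal N\to\mathbb{R}_{\ge0}$ such that (i) whenever $N_1$ lies on the path from $N_2$ to the root, $W(N_1)\ge W(N_2)$, and (ii) $d(x,y)=W(\mathrm{LCA}_T(x,y))$ for all distinct $x,y\in V$. A hierarchical clustering tree on $V$ is a rooted binary tree whose leaves are in bijection with $V$; each node is identified with the set of points at the leaves of its subtree, and an internal node with set $S$ whose children have sets $S_1,S_2$ gives the split $S\to(S_1,S_2)$. $\rho(S)=\frac1{|S|}\sum_{u\in S}u$. For a split $S\to(S_1,S_2)$ and $i\in S_1,j\in S_2$, $rev(i,j)=\min\{d(i,j)/\max\{d(i,\rho(S_1)),d(j,\rho(S_2))\},1\}$ (equal to $1$ if the maximum is $0$); for a pair $\{i,j\}$ this is evaluated at the split where $i,j$ are first separated, and $rev_T(V)=\sum_{\{i,j\}\subseteq V}rev(i,j)$. *)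

From HB Require Import structures.
From mathcomp Require Import all_boot all_order all_algebra.
From mathcomp Require Import reals.
Set Implicit Arguments. Unset Strict Implicit. Unset Printing Implicit Defensive.
Import Order.TTheory GRing.Theory Num.Theory.
Local Open Scope ring_scope.

Section Defs.
Variables (R : realType) (m : nat).
Notation P := 'rV[R]_m.

Definition dist (x y : P) : R := Num.sqrt (\sum_(k < m) (x 0 k - y 0 k) ^+ 2).

Definition ultrametric_on (V : seq P) : Prop :=
  forall x y z, x \in V -> y \in V -> z \in V ->
    dist x y <= Num.max (dist x z) (dist y z).

Inductive btree := BLeaf of P | BNode of btree & btree.

Fixpoint leaves (t : btree) : seq P :=
  match t with BLeaf x => [:: x] | BNode l r => leaves l ++ leaves r end.

Definition hc_tree (V : seq P) (t : btree) : Prop :=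
  uniq (leaves t) /\ perm_eq (leaves t) V.

Definition rho (S : btree) : P :=
  (size (leaves S))%:R^-1 *: \sum_(u <- leaves S) u.

Definition rev_split (S1 S2 : btree) (i j : P) : R :=
  let M := Num.max (dist i (rho S1)) (dist j (rho S2)) in
  if M == 0 then 1 else Num.min (dist i j / M) 1.

Fixpoint hrev (t : btree) (i j : P) : R :=
  match t with
  | BLeaf _ => 0
  | BNode l r =>
      if (i \in leaves l) && (j \in leaves r) then rev_split l r i j
      else if (j \in leaves l) && (i \in leaves r) then rev_split l r j i
      else if (i \in leaves l) && (j \in leaves l) then hrev l i j
      else hrev r i j
  end.

Definition revT (t : btree) : R :=
  let s := leaves t in
  \sum_(k < size s) \sum_(l < size s | (k < l)%N) hrev t (nth 0 s k) (nth 0 s l).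

Inductive wtree := WLeaf of P | WNode of R & wtree & wtree.

Fixpoint wshape (t : wtree) : btree :=
  match t with WLeaf x => BLeaf x | WNode _ l r => BNode (wshape l) (wshape r) end.

Fixpoint weights (t : wtree) : seq R :=
  match t with WLeaf _ => [::] | WNode w l r => w :: weights l ++ weights r end.

(* (i) W >= 0 and W(N1) >= W(N2) whenever N1 is an ancestor of N2;
   (ii) d(x,y) = W(LCA(x,y)): for a node N with children l, r, every x in l
   and y in r (distinct leaves) have N as LCA. *)
Fixpoint generating_conds (t : wtree) : Prop :=
  match t with
  | WLeaf _ => True
  | WNode w l r =>
      [/\ 0 <= w,
          all (fun w' => w' <= w) (weights l ++ weights r),
          (forall x y, x \in leaves (wshape l) -> y \in leaves (wshape r) ->
              dist x y = w /\ dist y x = w),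
          generating_conds l & generating_conds r]
  end.

Definition generating_tree (V : seq P) (t : wtree) : Prop :=
  hc_tree V (wshape t) /\ generating_conds t.

End Defs.

From HB Require Import structures.
From mathcomp Require Import all_boot all_order all_algebra.
From mathcomp Require Import reals.
From mathcomp Require Import ring lra.
Import Order.TTheory GRing.Theory Num.Theory.
Local Open Scope ring_scope.
Set Implicit Arguments. Unset Strict Implicit.

(* Let N be an internal node of the generating tree with weight
   w and children S1, S2.  Two leaves i in S1, j in S2 are first separated at
   N and satisfy d(i,j) = w.  Every two leaves of S1 are at distance at most w
   (they meet at a descendant of N, whose weight is at most w), so S1 lies in
   the closed Euclidean ball of radius w around i.  Balls are convex, hence
   the centroid rho(S1) lies in that ball too: d(i, rho(S1)) <= w, and
   likewise d(j, rho(S2)) <= w.  Therefore the ratio defining rev(i,j) is at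
   least 1 and rev(i,j) = 1.  Since revenues never exceed 1, the value of any
   hierarchical clustering tree is at most the number C(|V|,2) of pairs,
   which the generating tree attains. *)

Lemma sum_pairs_one (R : pzSemiRingType) (n : nat) :
  \sum_(k < n) \sum_(l < n | (k < l)%N) (1 : R) = ('C(n, 2))%:R.
Proof.
elim: n => [|n IH]; first by rewrite big_ord0.
rewrite big_ord_recr /= [X in _ + X]big1 => [|l]; last first.
  by rewrite ltnNge -ltnS ltn_ord.
rewrite addr0 (eq_bigr (fun k : 'I_n => \sum_(l < n | (k < l)%N) (1 : R) + 1)).
  by rewrite big_split /= IH sumr_const card_ord binS bin1 natrD.
move=> k _; rewrite big_mkcond big_ord_recr /= ltn_ord -big_mkcond /=.
by congr (_ + _); apply: eq_bigl.
Qed.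

Section CauchySchwarz.
Variables (R : realDomainType) (T : Type) (f : T -> R).

(* Expanded form of  0 <= \sum_(u <- s) (x - f u)^2. *)
Lemma sum_sqr_dev_ge0 (s : seq T) (x : R) :
  2 * x * \sum_(u <- s) f u <= (size s)%:R * x ^+ 2 + \sum_(u <- s) f u ^+ 2.
Proof.
elim: s => [|a s IH]; first by rewrite !big_nil mul0r mulr0 addr0.
rewrite !big_cons /= -natr1; have := sqr_ge0 (x - f a).
set S := \sum_(u <- s) f u in IH *; set Q := \sum_(u <- s) f u ^+ 2 in IH *.
nra.
Qed.

Lemma sum_sqr_le (s : seq T) :
  (\sum_(u <- s) f u) ^+ 2 <= (size s)%:R * \sum_(u <- s) f u ^+ 2.
Proof.
elim: s => [|a s IH]; first by rewrite !big_nil expr0n /= mul0r.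
rewrite !big_cons /= -natr1; have := sum_sqr_dev_ge0 s (f a).
set S := \sum_(u <- s) f u in IH *; set Q := \sum_(u <- s) f u ^+ 2 in IH *.
nra.
Qed.

End CauchySchwarz.

Section EuclideanBalls.
Variables (R : realType) (m : nat).
Implicit Types (x y i : 'rV[R]_m) (s : seq 'rV[R]_m).

Lemma dist_xx x : dist x x = 0.
Proof. by rewrite /dist big1 ?sqrtr0 // => k _; rewrite subrr expr0n. Qed.

Lemma dist_le x y w : 0 <= w ->
  (dist x y <= w) = (\sum_(k < m) (x 0 k - y 0 k) ^+ 2 <= w ^+ 2).
Proof.
by move=> w0; rewrite /dist -{1}(ger0_norm w0) -sqrtr_sqr ler_sqrt // sqr_ge0.
Qed.

Lemma dist_centroid_le s i w : (0 < size s)%N -> 0 <= w ->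
  {in s, forall u, dist i u <= w} ->
  dist i ((size s)%:R^-1 *: \sum_(u <- s) u) <= w.
Proof.
move=> s0 w0 near_i; rewrite dist_le //.
set n := size s; set c := _ *: _.
have n0 : 0 < n%:R :> R by rewrite ltr0n.
have coord k : i 0 k - c 0 k = n%:R^-1 * \sum_(u <- s) (i 0 k - u 0 k).
  rewrite mxE summxE sumrB big_const_seq count_predT iter_addr addr0 -/n.
  by rewrite -mulr_natl; field; lra.
have coord_le k : (i 0 k - c 0 k) ^+ 2
    <= n%:R^-1 * \sum_(u <- s) (i 0 k - u 0 k) ^+ 2.
  rewrite coord exprMn.
  have -> : n%:R^-1 * \sum_(u <- s) (i 0 k - u 0 k) ^+ 2 =
      n%:R^-1 ^+ 2 * (n%:R * \sum_(u <- s) (i 0 k - u 0 k) ^+ 2).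
    by field; lra.
  by rewrite ler_wpM2l ?exprn_ge0 ?invr_ge0 ?ler0n // sum_sqr_le.
apply: le_trans (ler_sum _ (fun k _ => coord_le k)) _.
rewrite -mulr_sumr exchange_big /= big_seq.
apply: le_trans (_ : n%:R^-1 * \sum_(u <- s) w ^+ 2 <= _).
  rewrite ler_wpM2l ?invr_ge0 ?ler0n // [X in _ <= X]big_seq.
  by apply: ler_sum => u us; rewrite -dist_le // near_i.
rewrite big_const_seq count_predT iter_addr addr0 -/n -(mulr_natl (w ^+ 2)).
by rewrite mulrA mulVf ?mul1r //; lra.
Qed.

End EuclideanBalls.

Section Trees.
Variables (R : realType) (m : nat).

Lemma size_leaves_gt0 (t : btree R m) : (0 < size (leaves t))%N.
Proof. by elim: t => [//|l IHl r IHr] /=; rewrite size_cat addn_gt0 IHl. Qed.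

Lemma dist_rho_le (S : btree R m) i w : 0 <= w ->
  {in leaves S, forall u, dist i u <= w} -> dist i (rho S) <= w.
Proof. exact/dist_centroid_le/size_leaves_gt0. Qed.

Lemma leaves_dist_le (t : wtree R m) c : 0 <= c ->
  all (fun w' => w' <= c) (weights t) -> generating_conds t ->
  {in leaves (wshape t) &, forall x y, dist x y <= c}.
Proof.
move=> c0; elim: t => [a|w l IHl r IHr] /=.
  by move=> _ _ x y; rewrite !inE => /eqP -> /eqP ->; rewrite dist_xx.
move=> /andP[wc]; rewrite all_cat => /andP[al ar] [_ _ dist_w gl gr] x y.
rewrite !mem_cat => /orP[xl|xr] /orP[yl|yr].
- exact: IHl.
- by rewrite (dist_w x y xl yr).1.
- by rewrite (dist_w y x yl xr).2.
- exact: IHr.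
Qed.

(* At a node of weight w = d(i,j), both i and j are at most w away from the
   centroids of their sides, so the revenue of the pair is 1. *)
Lemma rev_split_one (l r : wtree R m) w i j : 0 <= w ->
  all (fun w' => w' <= w) (weights l) -> all (fun w' => w' <= w) (weights r) ->
  generating_conds l -> generating_conds r ->
  i \in leaves (wshape l) -> j \in leaves (wshape r) -> dist i j = w ->
  rev_split (wshape l) (wshape r) i j = 1.
Proof.
move=> w0 al ar gl gr il jr dij.
have di := dist_rho_le w0 (fun u => leaves_dist_le w0 al gl il).
have dj := dist_rho_le w0 (fun u => leaves_dist_le w0 ar gr jr).
rewrite /rev_split; case: eqP => // /eqP M_neq0.
set M := Num.max _ _ in M_neq0 *.
have M_le_w : M <= w by rewrite ge_max di dj.
have M_gt0 : 0 < M by rewrite lt_neqAle eq_sym M_neq0 le_max sqrtr_ge0.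
by apply: min_r; rewrite dij ler_pdivlMr // mul1r.
Qed.

Lemma hrev_generating (t : wtree R m) : generating_conds t ->
  {in leaves (wshape t) &, forall i j, i != j -> hrev (wshape t) i j = 1}.
Proof.
elim: t => [a|w l IHl r IHr] /=.
  by move=> _ i j; rewrite !inE => /eqP -> /eqP ->; rewrite eqxx.
move=> [w0 /[!all_cat] /andP[al ar] dist_w gl gr] i j hi hj nij.
case: ifP => [/andP[il jr] | not_lr].
  exact: rev_split_one w0 al ar gl gr il jr (dist_w i j il jr).1.
case: ifP => [/andP[jl ir] | not_rl].
  exact: rev_split_one w0 al ar gl gr jl ir (dist_w j i jl ir).1.
case: ifP => [/andP[il jl] | not_ll]; first exact: IHl.
have [ir jr] : i \in leaves (wshape r) /\ j \in leaves (wshape r).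
  move: hi hj not_lr not_rl not_ll; rewrite !mem_cat.
  by case: (i \in _); case: (i \in _); case: (j \in _); case: (j \in _).
exact: IHr.
Qed.

Lemma hrev_le1 (t : btree R m) i j : hrev t i j <= 1.
Proof.
elim: t => [a|l IHl r IHr] /=; first exact: ler01.
have split_le1 a b : rev_split l r a b <= 1.
  by rewrite /rev_split; case: ifP => // _; rewrite ge_min lexx orbT.
by repeat case: ifP => _.
Qed.

Lemma revT_le_pairs (t : btree R m) : revT t <= ('C(size (leaves t), 2))%:R.
Proof.
rewrite /revT -sum_pairs_one.
by apply: ler_sum => k _; apply: ler_sum => l _; exact: hrev_le1.
Qed.

Lemma revT_eq_pairs (t : btree R m) : uniq (leaves t) ->
  {in leaves t &, forall i j, i != j -> hrev t i j = 1} ->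
  revT t = ('C(size (leaves t), 2))%:R.
Proof.
move=> ut rev1; rewrite /revT -sum_pairs_one.
apply: eq_bigr => k _; apply: eq_bigr => l kl.
by rewrite rev1 ?mem_nth // nth_uniq // neq_ltn kl.
Qed.

End Trees.

Theorem mainTheorem10 (R : realType) (m : nat) (V : seq 'rV[R]_m) (T : wtree R m) :
  uniq V ->
  ultrametric_on V ->
  generating_tree V T ->
  [/\ (forall i j, i \in V -> j \in V -> i != j -> hrev (wshape T) i j = 1),
      revT (wshape T) = ('C(size V, 2))%:R
    & forall T' : btree R m, hc_tree V T' -> revT T' <= revT (wshape T)].
Proof.
move=> _ _ [[uT permT] genT].
have rev1 := hrev_generating genT.
have revT_max : revT (wshape T) = ('C(size V, 2))%:R.
  by rewrite revT_eq_pairs // (perm_size permT).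
split=> // [i j iV jV|T' [_ permT']].
  by apply: rev1; rewrite (perm_mem permT).
by rewrite revT_max -(perm_size permT'); exact: revT_le_pairs.
Qed.
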